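(* Let $\varepsilon\in\{-1,1\}$, let $M(\phi,\xi,\eta,g_M)$ be a Lorentzian almost (para)contact manifold of dimension $2m+1$, let $(N,g_N)$ be a semi-Riemannian manifold of dimension $n$, and let $F:M\to N$ be an anti-invariant semi-Riemannian submersion such that $\phi(\ker F_* )=(\ker F_* )^\perp$. Then $\xi$ is vertical and $m=n$. Moreover, $N$ is a Riemannian manifold.
   Context: A Lorentzian almost contact ($\varepsilon=-1$), resp. almost paracontact ($\varepsilon=1$), manifold is a $(2m+1)$-dimensional manifold $M$ with Lorentzian metric $g_M$, $(1,1)$-tensor $\phi$, vector field $\xi$ and $1$-form $\eta$ with $\phi^2X=\varepsilon X+\eta(X)\xi$, $g_M(\phi X,\phi Y)=g_M(X,Y)+\eta(X)\eta(Y)$, $\eta(X)=\varepsilon g_M(X,\xi)$, $\eta(\xi)=-\varepsilon$. A semi-Riemannian submersion $F:M\to N$ is a submersion with nondegenerate fibres such that $F_*$ is an isometry from $(\ker F_* )^\perp$ onto $TN$; it is anti-invariant if $\phi(\ker F_* )\subseteq(\ker F_* )^\perp$. $\xi$ vertical means $\xi$ takes values in $\ker F_*$. A Riemannian manifold has positive definite metric. *)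

(* Pointwise (tangent-space) model of semi-Riemannian
   manifolds and submersions. *)
From HB Require Import structures.
From mathcomp Require Import all_boot all_order all_algebra.
From mathcomp Require Import reals.
Set Implicit Arguments. Unset Strict Implicit. Unset Printing Implicit Defensive.
Import Order.TTheory GRing.Theory Num.Theory.
Local Open Scope ring_scope.

Section Defs.
Variable R : realType.

Definition bil (d : nat) (G : 'M[R]_d) (u v : 'rV[R]_d) : R := (u *m G *m v^T) 0 0.

Definition sig_mx (d k : nat) : 'M[R]_d :=
  diag_mx (\row_(i < d) if (i < k)%N then -1 else 1).

Definition has_index (d : nat) (G : 'M[R]_d) (k : nat) : Prop :=
  G^T = G /\ (k <= d)%N /\
  exists P : 'M[R]_d, P \in unitmx /\ P *m G *m P^T = sig_mx d k.

Definition pos_def (d : nat) (G : 'M[R]_d) : Prop :=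
  forall v : 'rV[R]_d, v != 0 -> 0 < bil G v v.

(* (N, gN): semi-Riemannian manifold of dimension n: at each point the metric
   is a nondegenerate symmetric form on T_qN = R^n, of constant index. *)
Definition semi_riemannian (N : Type) (n : nat) (gN : N -> 'M[R]_n) : Prop :=
  exists nu : nat, forall q, has_index (gN q) nu.

Definition riemannian (N : Type) (n : nat) (gN : N -> 'M[R]_n) : Prop :=
  forall q, (gN q)^T = gN q /\ pos_def (gN q).

(* Lorentzian almost contact (eps = -1) / paracontact (eps = 1) structure,
   tangent spaces T_pM = R^(2m+1); phi acts on the right: phi X = X *m Phi p *)
Definition lorentzian_almost_paracontact (M : Type) (eps : R) (m : nat)
  (g : M -> 'M[R]_(2 * m + 1)) (Phi : M -> 'M[R]_(2 * m + 1))
  (xi : M -> 'rV[R]_(2 * m + 1)) (eta : M -> 'rV[R]_(2 * m + 1) -> R) : Prop :=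
  forall p,
    has_index (g p) 1 /\
    (forall X, X *m Phi p *m Phi p = eps *: X + eta p X *: xi p) /\
    (forall X Y, bil (g p) (X *m Phi p) (Y *m Phi p)
                 = bil (g p) X Y + eta p X * eta p Y) /\
    (forall X, eta p X = eps * bil (g p) X (xi p)) /\
    eta p (xi p) = - eps.

Definition vertical (M : Type) (d n : nat) (dF : M -> 'M[R]_(d, n))
  (p : M) (u : 'rV[R]_d) : Prop := u *m dF p = 0.

Definition horizontal (M : Type) (d n : nat) (g : M -> 'M[R]_d)
  (dF : M -> 'M[R]_(d, n)) (p : M) (u : 'rV[R]_d) : Prop :=
  forall v, vertical dF p v -> bil (g p) u v = 0.

Definition semi_riemannian_submersion (M N : Type) (d n : nat)
  (gM : M -> 'M[R]_d) (gN : N -> 'M[R]_n) (F : M -> N)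
  (dF : M -> 'M[R]_(d, n)) : Prop :=
  forall p,
    row_full (dF p) /\
    (forall u, vertical dF p u ->
       (forall v, vertical dF p v -> bil (gM p) u v = 0) -> u = 0) /\
    (forall u w, horizontal gM dF p u -> horizontal gM dF p w ->
       bil (gN (F p)) (u *m dF p) (w *m dF p) = bil (gM p) u w) /\
    (forall y : 'rV[R]_n, exists2 u, horizontal gM dF p u & u *m dF p = y).

Definition anti_invariant (M : Type) (d n : nat) (gM : M -> 'M[R]_d)
  (Phi : M -> 'M[R]_d) (dF : M -> 'M[R]_(d, n)) : Prop :=
  forall p v, vertical dF p v -> horizontal gM dF p (v *m Phi p).

Definition phi_vert_eq_horiz (M : Type) (d n : nat) (gM : M -> 'M[R]_d)
  (Phi : M -> 'M[R]_d) (dF : M -> 'M[R]_(d, n)) : Prop :=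
  forall p,
    (forall v, vertical dF p v -> horizontal gM dF p (v *m Phi p)) /\
    (forall h, horizontal gM dF p h ->
       exists2 v, vertical dF p v & v *m Phi p = h).

End Defs.

(* At a point p let V = ker F_* and H = V^perp.  The identities for phi force
   phi xi = 0, ker phi = span xi and g(phi X, xi) = 0; since phi V = H, the
   vector xi is orthogonal to H, hence vertical.  Counting dimensions for
   phi : V -> H, whose kernel is span xi, gives (2m+1-n) - 1 = n.  Finally
   g_N(F_* phi v, F_* phi v) = g(phi v, phi v) = g(w, w) with
   w = v + g(v, xi) xi orthogonal to the timelike xi, and in a Lorentzian space
   the orthogonal of a timelike vector is spacelike; so g_N is positive
   definite at F p and, its index being constant, everywhere. *)
From HB Require Import structures.
From mathcomp Require Import all_boot all_order all_algebra.
From mathcomp Require Import reals.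
From mathcomp Require Import ring lra zify.
Set Implicit Arguments. Unset Strict Implicit. Unset Printing Implicit Defensive.
Import Order.TTheory GRing.Theory Num.Theory.
Local Open Scope ring_scope.

Section BilinearForm.
Variables (R : realType) (d : nat).
Implicit Types (G P : 'M[R]_d) (u v w : 'rV[R]_d).

Lemma bilDl G u v w : bil G (u + v) w = bil G u w + bil G v w.
Proof. by rewrite /bil !mulmxDl mxE. Qed.

Lemma bilDr G u v w : bil G u (v + w) = bil G u v + bil G u w.
Proof. by rewrite /bil linearD /= mulmxDr mxE. Qed.

Lemma bilZl G a u v : bil G (a *: u) v = a * bil G u v.
Proof. by rewrite /bil -!scalemxAl mxE. Qed.

Lemma bilZr G a u v : bil G u (a *: v) = a * bil G u v.
Proof. by rewrite /bil linearZ /= -scalemxAr mxE. Qed.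

Lemma bilNl G u v : bil G (- u) v = - bil G u v.
Proof. by rewrite -scaleN1r bilZl mulN1r. Qed.

Lemma bilNr G u v : bil G u (- v) = - bil G u v.
Proof. by rewrite -scaleN1r bilZr mulN1r. Qed.

Lemma bil0l G v : bil G 0 v = 0.
Proof. by rewrite /bil !mul0mx mxE. Qed.

Lemma bil_sym G u v : G^T = G -> bil G u v = bil G v u.
Proof.
move=> symG; rewrite /bil -[in RHS](trmxK (v *m G *m u^T)) [RHS]mxE.
by rewrite !trmx_mul trmxK symG mulmxA.
Qed.

Lemma bil_mulmx G P u v : bil G (u *m P) (v *m P) = bil (P *m G *m P^T) u v.
Proof. by rewrite /bil trmx_mul !mulmxA. Qed.

Lemma bil_nondeg G u : G \in unitmx -> (forall v, bil G u v = 0) -> u = 0.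
Proof.
move=> unitG uG0; suff uG : u *m G = 0 by rewrite -(mulmxK unitG u) uG mul0mx.
apply/rowP => j; have := uG0 (delta_mx 0 j).
by rewrite /bil trmx_delta -colE !mxE.
Qed.

End BilinearForm.

Section Sylvester.
Variable R : realType.
Implicit Types (d k : nat).

Lemma sig_mx_sym d k : (sig_mx R d k)^T = sig_mx R d k.
Proof. exact: tr_diag_mx. Qed.

Lemma sig_mx_unit d k : sig_mx R d k \in unitmx.
Proof.
rewrite unitmxE det_diag unitfE; apply/prodf_neq0 => i _.
by rewrite mxE; case: ifP; rewrite ?oppr_eq0 oner_eq0.
Qed.

Lemma has_index_unitmx d (G : 'M[R]_d) k : has_index G k -> G \in unitmx.
Proof.
case=> _ [_ [P [_ PGP]]].
by have := sig_mx_unit d k; rewrite -PGP !unitmx_mul => /andP[/andP[]].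
Qed.

Lemma has_index_coords d (G : 'M[R]_d) k : has_index G k ->
  exists2 Q, Q \in unitmx &
    forall u v, bil G u v = bil (sig_mx R d k) (u *m Q) (v *m Q).
Proof.
case=> _ [_ [P [unitP PGP]]]; exists (invmx P); first by rewrite unitmx_inv.
by move=> u v; rewrite -PGP -bil_mulmx !mulmxKV.
Qed.

Lemma sum_sqr_ge0 d (u : 'rV[R]_d) : 0 <= \sum_j u 0 j ^+ 2.
Proof. by apply: sumr_ge0 => j _; exact: sqr_ge0. Qed.

Lemma sum_sqr_eq0 d (u : 'rV[R]_d) : \sum_j u 0 j ^+ 2 = 0 -> u = 0.
Proof.
move=> /psumr_eq0P-/(_ (fun j _ => sqr_ge0 _)) u0.
by apply/rowP => j; apply/eqP; rewrite mxE -sqrf_eq0 u0.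
Qed.

Lemma bil_sig_mx_spacelike d k (u : 'rV[R]_d) :
  (forall j : 'I_d, (j < k)%N -> u 0 j = 0) ->
  bil (sig_mx R d k) u u = \sum_j u 0 j ^+ 2.
Proof.
move=> u_time0; rewrite /bil mul_mx_diag mxE; apply: eq_bigr => j _.
rewrite !mxE; case: ltnP => [/u_time0 -> | _]; last by rewrite mulr1 expr2.
by rewrite !(mul0r, mulr0, expr0n).
Qed.

Lemma has_index0_pos_def d (G : 'M[R]_d) : has_index G 0 -> pos_def G.
Proof.
case/has_index_coords=> Q unitQ GQ u u0; rewrite GQ bil_sig_mx_spacelike //.
rewrite lt_def sum_sqr_ge0 andbT; apply: contra u0 => /eqP/sum_sqr_eq0 uQ0.
by rewrite -(mulmxK unitQ u) uQ0 mul0mx.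
Qed.

Lemma pos_def_index0 d (G : 'M[R]_d) k : pos_def G -> has_index G k -> k = 0%N.
Proof.
move=> posG [_ [kd [P [unitP PGP]]]]; apply/eqP; rewrite -leqn0 leqNgt.
apply/negP => k_gt0; have d_gt0 : (0 < d)%N := leq_trans k_gt0 kd.
pose e0 : 'rV[R]_d := delta_mx 0 (Ordinal d_gt0).
have e0P : e0 *m P != 0.
  apply/eqP => /(congr1 (fun A => (A *m invmx P) 0 (Ordinal d_gt0))).
  by rewrite mulmxK // mul0mx !mxE eqxx; apply/eqP; rewrite oner_eq0.
have := posG _ e0P.
rewrite bil_mulmx PGP /bil trmx_delta -rowE -colE !mxE eqxx.
by rewrite mulr1n k_gt0 ltr0N1.
Qed.

Lemma sig_mx1_timelike_orth d (u z : 'rV[R]_d) :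
  let S := sig_mx R d 1 in
  bil S z z < 0 -> bil S u z = 0 -> bil S u u <= 0 -> u = 0.
Proof.
case: d u z => [|d] u z S zz uz uu; first exact: thinmx0.
have spacelike (x : 'rV[R]_d.+1) : x 0 0 = 0 -> bil S x x = \sum_j x 0 j ^+ 2.
  move=> x0; apply: bil_sig_mx_spacelike => j; rewrite ltnS leqn0 => /eqP j0.
  by rewrite (_ : j = 0) //; apply/val_inj.
have z0 : z 0 0 != 0.
  by apply: contraTneq zz => /spacelike ->; rewrite -leNgt sum_sqr_ge0.
(* [x] has no timelike coordinate, yet [bil S x x <= 0] unless [u 0 0 = 0]. *)
pose x := z 0 0 *: u - u 0 0 *: z.
have x0 : x 0 0 = 0 by rewrite !mxE mulrC subrr.
have xx : bil S x x = z 0 0 ^+ 2 * bil S u u + u 0 0 ^+ 2 * bil S z z.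
  rewrite !(bilDl, bilDr, bilNl, bilNr, bilZl, bilZr).
  by rewrite (bil_sym z u (sig_mx_sym _ _)) uz; ring.
have xx_ge0 : 0 <= bil S x x by rewrite spacelike ?sum_sqr_ge0.
have u00 : u 0 0 = 0.
  apply/eqP; rewrite -sqrf_eq0 eq_le sqr_ge0 andbT.
  have := sqr_ge0 (z 0 0); move: xx_ge0; rewrite xx; nra.
have : bil S x x = 0.
  apply/eqP; rewrite eq_le xx_ge0 xx u00 expr0n mul0r addr0.
  by rewrite mulr_ge0_le0 ?sqr_ge0.
rewrite spacelike // => /sum_sqr_eq0/eqP.
by rewrite /x u00 scale0r subr0 scaler_eq0 (negPf z0) => /eqP.
Qed.

Lemma index1_timelike_orth d (G : 'M[R]_d) (u z : 'rV[R]_d) : has_index G 1 ->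
  bil G z z < 0 -> bil G u z = 0 -> bil G u u <= 0 -> u = 0.
Proof.
case/has_index_coords=> Q unitQ GQ; rewrite !GQ => zz uz uu.
by rewrite -(mulmxK unitQ u) (sig_mx1_timelike_orth zz uz uu) mul0mx.
Qed.

End Sylvester.

Section LorentzianParacontactTensors.
Variables (R : realType) (d : nat) (eps : R) (G Phi : 'M[R]_d).
Variables (xi : 'rV[R]_d) (eta : 'rV[R]_d -> R).
Hypotheses (eps_sign : eps = 1 \/ eps = -1) (G_index1 : has_index G 1).
Hypothesis Phi_sqr : forall X, X *m Phi *m Phi = eps *: X + eta X *: xi.
Hypothesis bil_Phi :
  forall X Y, bil G (X *m Phi) (Y *m Phi) = bil G X Y + eta X * eta Y.
Hypotheses (etaE : forall X, eta X = eps * bil G X xi) (eta_xi : eta xi = - eps).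

Lemma eps_sqr : eps * eps = 1.
Proof. by case: eps_sign => ->; rewrite ?mulr1 ?mulrNN ?mulr1. Qed.

Lemma bil_xi_xi : bil G xi xi = -1.
Proof.
have := congr1 (GRing.mul eps) eta_xi.
by rewrite etaE mulrA eps_sqr mul1r mulrN eps_sqr.
Qed.

Lemma xi_neq0 : xi != 0.
Proof.
by apply: contra_eq_neq bil_xi_xi => ->; rewrite bil0l eq_sym oppr_eq0 oner_eq0.
Qed.

Lemma ker_PhiE X : X *m Phi = 0 -> X = - (eps * eta X) *: xi.
Proof.
move=> XPhi; have := congr1 (GRing.scale eps) (Phi_sqr X).
rewrite XPhi mul0mx scaler0 scalerDr scalerA eps_sqr scale1r scalerA.
by move/esym/eqP; rewrite addr_eq0 scaleNr => /eqP.
Qed.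

Lemma Phi_xi : xi *m Phi = 0.
Proof.
set z := xi *m Phi.
have zPhi : z *m Phi = 0 by rewrite Phi_sqr eta_xi scaleNr subrr.
have /eqP := zPhi; rewrite {1}(ker_PhiE zPhi) -scalemxAl scaler_eq0.
by case/orP=> /eqP // c0; rewrite (ker_PhiE zPhi) c0 scale0r.
Qed.

Lemma eta_Phi X : eta (X *m Phi) = 0.
Proof.
have : X *m Phi *m Phi *m Phi = eps *: (X *m Phi).
  by rewrite (Phi_sqr X) mulmxDl -!scalemxAl Phi_xi scaler0 addr0.
rewrite Phi_sqr => /eqP; rewrite addrC -subr_eq0 addrK scaler_eq0.
by rewrite (negPf xi_neq0) orbF => /eqP.
Qed.

Lemma bil_Phi_xi X : bil G (X *m Phi) xi = 0.
Proof.
have /eqP := eta_Phi X; rewrite etaE mulf_eq0 => /orP[/eqP e0 | /eqP //].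
by move: eps_sqr; rewrite e0 mul0r => /eqP; rewrite eq_sym oner_eq0.
Qed.

Lemma bil_Phi_gt0 X : X *m Phi != 0 -> 0 < bil G (X *m Phi) (X *m Phi).
Proof.
move=> XPhi; have symG : G^T = G by case: G_index1.
pose w := X + bil G X xi *: xi.
have wxi : bil G w xi = 0 by rewrite bilDl bilZl bil_xi_xi mulrN1 subrr.
have ww : bil G (X *m Phi) (X *m Phi) = bil G w w.
  rewrite bil_Phi etaE !(bilDl, bilDr, bilZl, bilZr) (bil_sym xi X symG).
  by rewrite bil_xi_xi -[_ * _ * (_ * _)]mulrACA eps_sqr; ring.
rewrite ww ltNge; apply: contra XPhi => w_le0.
have xixi : bil G xi xi < 0 by rewrite bil_xi_xi ltrN10.
have /eqP : w = 0 := index1_timelike_orth G_index1 xixi wxi w_le0.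
by rewrite addr_eq0 => /eqP ->; rewrite mulNmx -scalemxAl Phi_xi scaler0 oppr0.
Qed.

End LorentzianParacontactTensors.

Section SubmersionAtPoint.
Variables (R : realType) (d n : nat) (M : Type).
Variables (gM : M -> 'M[R]_d) (dF : M -> 'M[R]_(d, n)) (p : M).
Hypotheses (gM_sym : (gM p)^T = gM p) (gM_unit : gM p \in unitmx).
Hypothesis dF_full : row_full (dF p).
Hypothesis fibre_nondeg :
  forall u, vertical dF p u -> horizontal gM dF p u -> u = 0.

Definition horizontal_mx := kermx (gM p *m (kermx (dF p))^T).

Lemma verticalP u : reflect (vertical dF p u) (u <= kermx (dF p))%MS.
Proof. exact: sub_kermxP. Qed.

Lemma horizontalP h : reflect (horizontal gM dF p h) (h <= horizontal_mx)%MS.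
Proof.
apply: (iffP sub_kermxP) => [hGK v /verticalP/submxP[c ->] | horh].
  by rewrite /bil trmx_mul mulmxA -(mulmxA h) hGK mul0mx mxE.
apply/rowP => j; have Kj_vert : vertical dF p (row j (kermx (dF p))).
  by rewrite /vertical -row_mul mulmx_ker row0.
transitivity (bil (gM p) h (row j (kermx (dF p)))); last by rewrite horh ?mxE.
by rewrite /bil mulmxA !mxE; apply: eq_bigr => k _; rewrite !mxE.
Qed.

Lemma rank_vertical : \rank (kermx (dF p)) = (d - n)%N.
Proof. by rewrite mxrank_ker (eqP dF_full). Qed.

Lemma submersion_dim_le : (n <= d)%N.
Proof. by rewrite -(eqP dF_full) rank_leq_row. Qed.

Lemma rank_horizontal : \rank horizontal_mx = n.
Proof.
rewrite mxrank_ker eqmxMfull ?row_full_unit // mxrank_tr rank_vertical.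
exact: subKn submersion_dim_le.
Qed.

Lemma vertical_horizontal_cap0 :
  \rank (kermx (dF p) :&: horizontal_mx)%MS = 0%N.
Proof.
apply/eqP; rewrite mxrank_eq0 -submx0; apply/row_subP => i.
have := row_sub i (kermx (dF p) :&: horizontal_mx)%MS.
rewrite sub_capmx => /andP[/verticalP vi /horizontalP hi].
by rewrite (fibre_nondeg vi hi) sub0mx.
Qed.

Lemma vertical_horizontal_decomp x :
  exists v h, [/\ x = v + h, vertical dF p v & horizontal gM dF p h].
Proof.
have full : row_full (kermx (dF p) + horizontal_mx)%MS.
  apply/eqP; move: (mxrank_sum_cap (kermx (dF p)) horizontal_mx).
  rewrite vertical_horizontal_cap0 addn0 rank_vertical rank_horizontal.
  by rewrite subnK // submersion_dim_le.
have /sub_addsmxP[[a b] /= ->] := submx_full x full.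
exists (a *m kermx (dF p)), (b *m horizontal_mx); split => //.
  by rewrite /vertical -mulmxA mulmx_ker mulmx0.
by apply/horizontalP; exact: submxMl.
Qed.

Lemma vertical_of_orth_horizontal x :
  (forall h, horizontal gM dF p h -> bil (gM p) h x = 0) -> vertical dF p x.
Proof.
have [v [h [-> vertv horh]]] := vertical_horizontal_decomp x => x_orth.
suff -> : h = 0 by rewrite addr0.
apply: bil_nondeg gM_unit _ => y.
have [v' [h' [-> vertv' horh']]] := vertical_horizontal_decomp y.
rewrite bilDr horh // add0r (bil_sym h h' gM_sym).
by have := x_orth h' horh'; rewrite bilDr horh' // add0r.
Qed.

End SubmersionAtPoint.

Lemma semi_riemannian_pos_def (R : realType) (N : Type) (n : nat)
    (gN : N -> 'M[R]_n) (q0 : N) :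
  semi_riemannian gN -> pos_def (gN q0) -> riemannian gN.
Proof.
move=> [nu gN_index] posq0 q.
have nu0 : nu = 0%N := pos_def_index0 posq0 (gN_index q0).
have [symq _] := gN_index q; split => //.
by apply: has_index0_pos_def; rewrite -nu0.
Qed.

Section AntiInvariantSubmersion.
Variables (R : realType) (eps : R) (m n : nat) (M N : Type).
Variables (gM Phi : M -> 'M[R]_(2 * m + 1)) (xi : M -> 'rV[R]_(2 * m + 1)).
Variables (eta : M -> 'rV[R]_(2 * m + 1) -> R).
Variables (gN : N -> 'M[R]_n) (F : M -> N) (dF : M -> 'M[R]_(2 * m + 1, n)).
Hypotheses (eps_sign : eps = 1 \/ eps = -1)
  (paracontact : lorentzian_almost_paracontact eps gM Phi xi eta)
  (submersion : semi_riemannian_submersion gM gN F dF)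
  (Phi_vert_horiz : phi_vert_eq_horiz gM Phi dF).
Variable p : M.

Lemma xi_vertical : vertical dF p (xi p).
Proof.
have [gM_index1 [Phi_sqr [bil_Phi [etaE eta_xi]]]] := paracontact p.
have [dF_full [fibre_nondeg _]] := submersion p.
have [gM_sym _] := gM_index1; have gM_unit := has_index_unitmx gM_index1.
apply: (vertical_of_orth_horizontal gM_sym gM_unit dF_full fibre_nondeg).
move=> h /(Phi_vert_horiz p).2[v _ <-].
exact: (bil_Phi_xi eps_sign Phi_sqr etaE eta_xi v).
Qed.

Lemma anti_invariant_dim : m = n.
Proof.
have [gM_index1 [Phi_sqr [bil_Phi [etaE eta_xi]]]] := paracontact p.
have [dF_full _] := submersion p; have [Phi_hor hor_Phi] := Phi_vert_horiz p.
have gM_unit := has_index_unitmx gM_index1.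
have Phi_image : (kermx (dF p) *m Phi p :=: horizontal_mx gM dF p)%MS.
  apply/eqmxP/andP; split; apply/row_subP => i.
    by rewrite row_mul; apply/horizontalP/Phi_hor/verticalP/row_sub.
  have /horizontalP/hor_Phi[v /verticalP vertv <-] :=
    row_sub i (horizontal_mx gM dF p).
  exact: submxMr.
have Phi_ker : (kermx (dF p) :&: kermx (Phi p) :=: xi p)%MS.
  apply/eqmxP/andP; split.
    apply/row_subP => i; have := row_sub i (kermx (dF p) :&: kermx (Phi p))%MS.
    rewrite sub_capmx => /andP[_ /sub_kermxP/(ker_PhiE eps_sign Phi_sqr) ->].
    by rewrite scalemx_sub.
  rewrite sub_capmx; apply/andP; split; first exact/verticalP/xi_vertical.
  exact/sub_kermxP/(Phi_xi eps_sign Phi_sqr eta_xi).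
have := mxrank_mul_ker (kermx (dF p)) (Phi p).
rewrite Phi_image Phi_ker rank_rV (xi_neq0 eps_sign etaE eta_xi).
rewrite rank_horizontal // rank_vertical //; lia.
Qed.

Lemma pos_def_at_image : pos_def (gN (F p)).
Proof.
have [gM_index1 [Phi_sqr [bil_Phi [etaE eta_xi]]]] := paracontact p.
have [_ [_ [isometry lift]]] := submersion p.
move=> y y_neq0; have [u horu uy] := lift y.
rewrite -uy isometry //; have [v _ vPhi] := (Phi_vert_horiz p).2 u horu.
rewrite -vPhi.
apply: (bil_Phi_gt0 eps_sign gM_index1 Phi_sqr bil_Phi etaE eta_xi).
by apply: contraNneq y_neq0 => vPhi0; rewrite -uy -vPhi vPhi0 mul0mx.
Qed.

End AntiInvariantSubmersion.

Theorem mainTheorem13 (R : realType) (eps : R) (m n : nat)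
  (M N : Type) (p0 : M)
  (gM : M -> 'M[R]_(2 * m + 1)) (Phi : M -> 'M[R]_(2 * m + 1))
  (xi : M -> 'rV[R]_(2 * m + 1)) (eta : M -> 'rV[R]_(2 * m + 1) -> R)
  (gN : N -> 'M[R]_n) (F : M -> N) (dF : M -> 'M[R]_(2 * m + 1, n)) :
  (eps = 1 \/ eps = -1) ->
  lorentzian_almost_paracontact eps gM Phi xi eta ->
  semi_riemannian gN ->
  semi_riemannian_submersion gM gN F dF ->
  anti_invariant gM Phi dF ->
  phi_vert_eq_horiz gM Phi dF ->
  (forall p, vertical dF p (xi p)) /\ m = n /\ riemannian gN.
Proof.
(* [anti_invariant] is the first half of [phi_vert_eq_horiz]. *)
move=> eps_sign paracontact gN_semi submersion _ Phi_vert_horiz.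
split; first exact: xi_vertical eps_sign paracontact submersion Phi_vert_horiz.
split; first exact: anti_invariant_dim eps_sign paracontact submersion
  Phi_vert_horiz p0.
apply: (semi_riemannian_pos_def gN_semi).
exact: pos_def_at_image eps_sign paracontact submersion Phi_vert_horiz p0.
Qed.
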